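(* Let $m\ge3$, $p\ne q\in[m]$, and let $\lambda_1,\lambda_2,\lambda_3$ be $\mathbb{Z}_2$-characteristic maps over $P_m$ with $\lambda_i(p)=\mathbf a$ and $\lambda_i(q)=\mathbf b$ for $i=1,2,3$, such that $\lambda_1,\lambda_2$ are $p$-adjacent and $\lambda_1,\lambda_3$ are $q$-adjacent. Then the following are equivalent: (1) the edges $\{\lambda_1,\lambda_2,p\}$ and $\{\lambda_1,\lambda_3,q\}$ span a realizable square, i.e. there is a $\mathbb{Z}_2$-characteristic map $\Lambda$ over $\mathrm{wed}_{p,q}P_m$ with $\operatorname{proj}_{\{p_2,q_2\}}\Lambda\simeq\lambda_1$, $\operatorname{proj}_{\{p_1,q_2\}}\Lambda\simeq\lambda_2$, $\operatorname{proj}_{\{p_2,q_1\}}\Lambda\simeq\lambda_3$; (2) $\overline{\lambda_1\Delta\lambda_2}\cap(\lambda_1\Delta\lambda_3)=\varnothing$; (3) $\overline{\lambda_1\Delta\lambda_2}\cap\overline{\lambda_1\Delta\lambda_3}=\varnothing$.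
   Context: $P_m$: simplicial complex on $[m]$ with facets $\{i,i+1\}$ mod $m$. $\mathbf a=(1,0)^T,\mathbf b=(0,1)^T,\mathbf c=(1,1)^T$; a $\mathbb{Z}_2$-characteristic map over $P_m$ is a map $[m]\to\{\mathbf a,\mathbf b,\mathbf c\}$ with $\lambda(i)\ne\lambda(i+1)$ mod $m$; $\simeq$ is D-J equivalence (composition with an element of $GL(n,\mathbb{Z}_2)$). For characteristic maps $\mu,\nu$, $\mu\Delta\nu=\{v\in[m]:\mu(v)\ne\nu(v)\}$; for $A\subseteq[m]$, $\overline A=\{v-1,v,v+1 \bmod m: v\in A\}$. Wedges: $\mathrm{wed}_pK$ replaces $p$ by $p_1,p_2$, with minimal non-faces those of $K$ with $p$ replaced by $\{p_1,p_2\}$ when it occurs; $\mathrm{wed}_{p,q}K$ does this for both $p$ and $q$. Projection: $\operatorname{proj}_\sigma\Lambda(w)=[\Lambda(w)]\in\mathbb{Z}_2^n/\langle\Lambda(v):v\in\sigma\rangle$ for $w$ in the link of $\sigma$; links of $p_2$ (resp. $p_1$) in $\mathrm{wed}_pK$ are identified with $K$ via $p_1\mapsto p$ (resp. $p_2\mapsto p$), and the link of $\{p_i,q_j\}$ in $\mathrm{wed}_{p,q}P_m$ with $P_m$ via $p_{3-i}\mapsto p,q_{3-j}\mapsto q$. D-J classes $\lambda,\lambda'$ over $P_m$ are $p$-adjacent if some characteristic map $\Lambda$ over $\mathrm{wed}_pP_m$ has $\operatorname{proj}_{p_2}\Lambda\simeq\lambda$, $\operatorname{proj}_{p_1}\Lambda\simeq\lambda'$.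 *)

From HB Require Import structures.
From mathcomp Require Import all_boot all_order all_algebra.
Set Implicit Arguments.
Unset Strict Implicit.
Unset Printing Implicit Defensive.
Import GRing.Theory.

Notation Z2 := 'F_2.

Definition vec_a : 'rV[Z2]_2 := \row_(j < 2) (if j == ord0 then 1%R else 0%R).
Definition vec_b : 'rV[Z2]_2 := \row_(j < 2) (if j == ord0 then 0%R else 1%R).
Definition vec_c : 'rV[Z2]_2 := \row_(j < 2) 1%R.

Definition Pm_face (m : nat) (S : {set 'I_m}) : bool :=
  [exists i : 'I_m, S \subset [set i; ordS i]].

Definition charmap_Pm (m : nat) (l : 'I_m -> 'rV[Z2]_2) : Prop :=
  forall i : 'I_m, l i \in [:: vec_a; vec_b; vec_c] /\ l i != l (ordS i).

Definition symdiff (m : nat) (mu nu : 'I_m -> 'rV[Z2]_2) : {set 'I_m} :=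
  [set v | mu v != nu v].

Definition nbhd (m : nat) (A : {set 'I_m}) : {set 'I_m} :=
  [set w | [exists v in A, [|| w == ord_pred v, w == v | w == ordS v]]].

(* A simplicial complex on a finite vertex type V is given by its face predicate. *)

Definition min_nonfaces (V : finType) (K : {set V} -> bool) : {set {set V}} :=
  [set N : {set V} | ~~ K N & [forall T : {set V}, (T \proper N) ==> K T]].

(* wed_p K, vertex type [option V]:  Some v = v (v <> p),
   Some p = p_1, None = p_2.  Minimal non-faces: those of K with p replaced
   by {p_1, p_2}. *)
Definition wed1_rep (V : finType) (p : V) (N : {set V}) : {set option V} :=
  (Some @: N) :|: (if p \in N then [set None] else set0).

Definition wed1 (V : finType) (K : {set V} -> bool) (p : V)
    (S : {set option V}) : bool :=
  [forall N in min_nonfaces K, ~~ (wed1_rep p N \subset S)].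

(* wed_{p,q} K, vertex type [V + bool]: inl v = v (v <> p,q),
   inl p = p_1, inr false = p_2, inl q = q_1, inr true = q_2. *)
Definition wed2_rep (V : finType) (p q : V) (N : {set V}) : {set V + bool} :=
  (inl @: N) :|: (if p \in N then [set inr false] else set0)
             :|: (if q \in N then [set inr true] else set0).

Definition wed2 (V : finType) (K : {set V} -> bool) (p q : V)
    (S : {set V + bool}) : bool :=
  [forall N in min_nonfaces K, ~~ (wed2_rep p q N \subset S)].

Definition is_charmap (V : finType) (n : nat) (K : {set V} -> bool)
    (L : V -> 'rV[Z2]_n) : Prop :=
  forall S : {set V}, K S -> free [seq L v | v <- enum S].

(* proj_sigma L ~ l (D-J equivalent), where the link of sigma is identified
   with [m] through kappa : 'I_m -> V (kappa v = vertex of the link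
   corresponding to v).  The quotient Z_2^n / <L v : v in sigma> is
   represented via linear surjections M : Z_2^n -> Z_2^k with kernel exactly
   <L v : v in sigma>; such M are exactly the compositions of the quotient
   map with linear isomorphisms onto Z_2^k, so the existence of M with
   [L (kappa v)] |-> l v means proj_sigma L ~ l. *)
Definition proj_equiv (V : finType) (n k m : nat) (L : V -> 'rV[Z2]_n)
    (sigma : {set V}) (kappa : 'I_m -> V) (l : 'I_m -> 'rV[Z2]_k) : Prop :=
  exists M : 'M[Z2]_(n, k),
    [/\ row_full M,
        (kermx M == (\sum_(v in sigma) <<L v>>)%MS)%MS
      & forall v : 'I_m, (L (kappa v) *m M)%R = l v].

(* link of p_2 : p_1 |-> p *)
Definition kap_p2 (m : nat) (v : 'I_m) : option 'I_m := Some v.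
(* link of p_1 : p_2 |-> p *)
Definition kap_p1 (m : nat) (p : 'I_m) (v : 'I_m) : option 'I_m :=
  if v == p then None else Some v.

Definition p_adjacent (m : nat) (p : 'I_m) (l l' : 'I_m -> 'rV[Z2]_2) : Prop :=
  exists L : option 'I_m -> 'rV[Z2]_3,
    [/\ is_charmap (wed1 (@Pm_face m) p) L,
        proj_equiv L [set None] (@kap_p2 m) l
      & proj_equiv L [set Some p] (kap_p1 p) l'].

(* identification of the link of {p_i, q_j} in wed_{p,q} P_m with P_m:
   p |-> pp (= p_{3-i}), q |-> qq (= q_{3-j}), v |-> v otherwise *)
Definition kap2 (m : nat) (p q : 'I_m) (pp qq : 'I_m + bool) (v : 'I_m)
    : 'I_m + bool :=
  if v == p then pp else if v == q then qq else inl v.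

Definition square_realizable (m : nat) (p q : 'I_m)
    (l1 l2 l3 : 'I_m -> 'rV[Z2]_2) : Prop :=
  exists L : 'I_m + bool -> 'rV[Z2]_4,
    [/\ is_charmap (wed2 (@Pm_face m) p q) L,
        (* proj_{p_2, q_2} L ~ l1 *)
        proj_equiv L [set inr false; inr true] (kap2 p q (inl p) (inl q)) l1,
        (* proj_{p_1, q_2} L ~ l2 *)
        proj_equiv L [set inl p; inr true] (kap2 p q (inr false) (inl q)) l2
      & (* proj_{p_2, q_1} L ~ l3 *)
        proj_equiv L [set inr false; inl q] (kap2 p q (inl p) (inr true)) l3].

From HB Require Import structures.
From mathcomp Require Import all_boot all_order all_algebra.

(* p-adjacency of l1 and l2 forces them to take the value a at the same
   vertices: if l1(v) = a = l1(p), then L v - L p_1 lies in the kernel of the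
   first projection, the Z_2-line spanned by L p_2, so it is 0 or L p_2; the
   second projection kills L p_1 and sends L p_2 to a, hence l2(v) = a.
   Likewise l1 and l3 take the value b at the same vertices.  With a = (1,0),
   b = (0,1), c = (1,1), l2 may thus only change the first coordinate of l1,
   and l3 only the second one.

   A characteristic map L realising the square is then forced: for v <> p, q,
     L v = l1(v)_1 L p_1 + l1(v)_2 L q_1 + l2(v)_1 L p_2 + l3(v)_2 L q_2.
   A vertex of both symmetric differences would give L v = L p_1 + L q_1, and
   adjacent v in l1 Delta l3, w in l1 Delta l2 (and in no other) would give
   L v - L w = L p_1 - L q_1; both contradict independence on a face of the
   wedge containing p_1 and q_1.  Conversely, when the neighbourhoods of the
   two symmetric differences are disjoint, the same formula with the standard
   basis for L p_1, L q_1, L p_2, L q_2 is a characteristic map: its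
   projection to the link of {p_1, q_1} agrees on every edge of P_m with l2 or
   with l3.  Finally, a vertex next to a change of l2 must carry a, and one
   next to a change of l3 must carry b, which turns the weak disjointness into
   the strong one. *)

Set Implicit Arguments.
Unset Strict Implicit.
Unset Printing Implicit Defensive.
Import GRing.Theory.
Local Open Scope ring_scope.

(** * The vectors a, b, c of Z_2^2 *)

Definition j0 : 'I_2 := ord0.
Definition j1 : 'I_2 := ord_max.

Lemma I2_cases (j : 'I_2) : j = j0 \/ j = j1.
Proof. by case: j => [[|[|n]] Hn]; [left | right | ]; try exact/val_inj. Qed.

Lemma Z2_cases (x : Z2) : x = 0 \/ x = 1.
Proof. by case: x => [[|[|n]] Hn]; [left | right | ]; try exact/val_inj. Qed.

Lemma pchar2_Z2 : 2%N \in [pchar Z2].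
Proof. exact: pchar_Fp. Qed.

Definition abc : seq 'rV[Z2]_2 := [:: vec_a; vec_b; vec_c].

Lemma neq_ab : (vec_a == vec_b) = false.
Proof. by apply/eqP => /rowP /(_ j0); rewrite !mxE => /eqP. Qed.
Lemma neq_ac : (vec_a == vec_c) = false.
Proof. by apply/eqP => /rowP /(_ j1); rewrite !mxE => /eqP. Qed.
Lemma neq_bc : (vec_b == vec_c) = false.
Proof. by apply/eqP => /rowP /(_ j0); rewrite !mxE => /eqP. Qed.
Lemma neq_ba : (vec_b == vec_a) = false. Proof. by rewrite eq_sym neq_ab. Qed.
Lemma neq_ca : (vec_c == vec_a) = false. Proof. by rewrite eq_sym neq_ac. Qed.
Lemma neq_cb : (vec_c == vec_b) = false. Proof. by rewrite eq_sym neq_bc. Qed.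
Definition neqs := (neq_ab, neq_ac, neq_bc, neq_ba, neq_ca, neq_cb, eqxx).

Lemma abc_cases (x : 'rV[Z2]_2) :
  x \in abc -> [\/ x = vec_a, x = vec_b | x = vec_c].
Proof.
by rewrite !inE => /or3P [] /eqP ->; [apply: Or31 | apply: Or32 | apply: Or33].
Qed.

Ltac abc_case H := case/abc_cases: H => ->.

Lemma abc_neq0 (x : 'rV[Z2]_2) : x \in abc -> x != 0.
Proof.
by case/abc_cases => ->; apply/eqP => /rowP;
  [move/(_ j0) | move/(_ j1) | move/(_ j0)]; rewrite !mxE => /eqP.
Qed.

Lemma abc_a : vec_a \in abc. Proof. by rewrite inE eqxx. Qed.
Lemma abc_b : vec_b \in abc. Proof. by rewrite !inE eqxx orbT. Qed.

Lemma abc_third (z t w1 w2 : 'rV[Z2]_2) :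
  z \in abc -> t \in abc -> w1 \in abc -> w2 \in abc ->
  (w1 == z) = (w2 == z) -> w1 != w2 -> t != w1 -> t != w2 -> t = z.
Proof.
by move=> hz ht h1 h2; abc_case hz; abc_case ht; abc_case h1; abc_case h2; rewrite ?neqs.
Qed.

Lemma abc_change_both (x1 x2 x3 : 'rV[Z2]_2) :
  x1 \in abc -> x2 \in abc -> x3 \in abc ->
  (x1 == vec_a) = (x2 == vec_a) -> (x1 == vec_b) = (x3 == vec_b) ->
  x1 != x2 -> x1 != x3 -> [/\ x1 = vec_c, x2 = vec_b & x3 = vec_a].
Proof. by move=> h1 h2 h3; abc_case h1; abc_case h2; abc_case h3; rewrite ?neqs. Qed.

Lemma abc_change_adjacent (v1 v3 w1 w2 : 'rV[Z2]_2) :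
  v1 \in abc -> v3 \in abc -> w1 \in abc -> w2 \in abc ->
  (v1 == vec_b) = (v3 == vec_b) -> (w1 == vec_a) = (w2 == vec_a) ->
  v1 != v3 -> w1 != w2 -> v1 != w1 -> v1 != w2 -> v3 != w1 ->
  [/\ v1 = vec_a, v3 = vec_c, w1 = vec_b & w2 = vec_c].
Proof.
by move=> h1 h2 h3 h4; abc_case h1; abc_case h2; abc_case h3; abc_case h4; rewrite ?neqs.
Qed.

Lemma abc_coord1 (x y : 'rV[Z2]_2) : x \in abc -> y \in abc ->
  (x == vec_a) = (y == vec_a) -> x 0 j1 = y 0 j1.
Proof. by move=> hx hy; abc_case hx; abc_case hy; rewrite ?neqs // !mxE. Qed.

Lemma abc_coord0 (x y : 'rV[Z2]_2) : x \in abc -> y \in abc ->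
  (x == vec_b) = (y == vec_b) -> x 0 j0 = y 0 j0.
Proof. by move=> hx hy; abc_case hx; abc_case hy; rewrite ?neqs // !mxE. Qed.

Lemma abc_det_neq0 (x y : 'rV[Z2]_2) : x \in abc -> y \in abc -> x != y ->
  x 0 j0 * y 0 j1 + x 0 j1 * y 0 j0 != 0.
Proof. by move=> hx hy; abc_case hx; abc_case hy; rewrite ?neqs // !mxE. Qed.

Lemma abc_form_neq0 (y : 'rV[Z2]_2) : y \in abc ->
  y 0 j0 * y 0 j0 + y 0 j1 * (1 - y 0 j0) != 0.
Proof. by move=> hy; abc_case hy; rewrite !mxE. Qed.

Definition mix (x y : 'rV[Z2]_2) : 'rV[Z2]_2 :=
  \row_j (if j == j0 then x 0 j0 else y 0 j1).

Lemma mix_id (x : 'rV[Z2]_2) : mix x x = x.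
Proof. by apply/rowP => j; rewrite mxE; case: (I2_cases j) => ->. Qed.

Lemma mix_eql (x y : 'rV[Z2]_2) : x 0 j1 = y 0 j1 -> mix x y = x.
Proof. by move=> e; apply/rowP => j; rewrite mxE; case: (I2_cases j) => ->. Qed.

Lemma mix_eqr (x y : 'rV[Z2]_2) : x 0 j0 = y 0 j0 -> mix x y = y.
Proof. by move=> e; apply/rowP => j; rewrite mxE; case: (I2_cases j) => ->. Qed.

Lemma rV2_decomp (r : 'rV[Z2]_2) : r = r 0 j0 *: vec_a + r 0 j1 *: vec_b.
Proof.
by apply/rowP => j; rewrite !mxE; case: (I2_cases j) => -> /=;
  rewrite mulr1 mulr0 ?addr0 ?add0r.
Qed.

(** * Linear algebra *)

Section LinearAlgebra.
Variable K : fieldType.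

Lemma sumsmx_set2 (T : finType) n (x y : T) (F : T -> 'M[K]_n) : x != y ->
  (\sum_(v in [set x; y]) F v = F x + F y)%MS.
Proof. by move=> xy; rewrite big_setU1 ?inE // big_set1. Qed.

Lemma kermx_plane n k (M : 'M[K]_(n, k)) (x y : 'rV_n) :
  (kermx M == <<x>> + <<y>>)%MS -> [/\ x *m M = 0, y *m M = 0 &
  forall t : 'rV_n, t *m M = 0 -> exists s s', t = s *: x + s' *: y].
Proof.
case/andP => kerM_sub sub_kerM; split.
- apply/sub_kermxP; apply: submx_trans sub_kerM.
  by apply: submx_trans (addsmxSl _ _); rewrite genmxE.
- apply/sub_kermxP; apply: submx_trans sub_kerM.
  by apply: submx_trans (addsmxSr _ _); rewrite genmxE.
move=> t /sub_kermxP /submx_trans /(_ kerM_sub).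
rewrite (adds_eqmx (genmxE x) (genmxE y)) => /sub_addsmxP [[u1 u2] ->] /=.
by exists (u1 0 0), (u2 0 0); rewrite -!mul_scalar_mx -!mx11_scalar.
Qed.

Lemma free_map_sub (T : eqType) (vT : vectType K) (L : T -> vT) (s t : seq T) :
  uniq s -> {subset s <= t} -> free (map L t) -> free (map L s).
Proof.
move=> s_uniq s_sub_t.
have s_perm : perm_eq s (filter (mem s) (undup t)).
  apply: uniq_perm => //; first exact/filter_uniq/undup_uniq.
  move=> x; rewrite mem_filter mem_undup.
  by apply/idP/andP => [xs | []] //; split => //; apply: s_sub_t.
rewrite (perm_free (perm_map L s_perm)).
have : subseq (map L (filter (mem s) (undup t))) (map L t).
  exact/map_subseq/(subseq_trans (filter_subseq _ _))/undup_subseq.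
by case/perm_to_subseq => r /perm_free ->; apply: catl_free.
Qed.

Lemma functional_notin_span n (phi : 'cV[K]_n) (X : seq 'rV[K]_n) v :
  (forall z, z \in X -> (z *m phi) 0 0 = 0) -> (v *m phi) 0 0 != 0 ->
  v \notin <<X>>%VS.
Proof.
move=> phiX phiv; apply/negP => /(coord_span (X := in_tuple X)) ev.
move: phiv; rewrite ev mulmx_suml summxE big1 ?eqxx // => i _.
by rewrite -scalemxAl mxE phiX ?mulr0 // mem_nth.
Qed.

End LinearAlgebra.

Lemma kermx_line n k (M : 'M[Z2]_(n, k)) (x : 'rV_n) :
  (kermx M == <<x>>)%MS -> x *m M = 0 /\
  forall t : 'rV_n, t *m M = 0 -> t = 0 \/ t = x.
Proof.
case/andP => kerM_sub sub_kerM; split.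
  by apply/sub_kermxP; apply: submx_trans sub_kerM; rewrite genmxE.
move=> t /sub_kermxP /submx_trans /(_ kerM_sub); rewrite genmxE.
case/submxP => D ->; rewrite (mx11_scalar D) mul_scalar_mx.
by case: (Z2_cases (D 0 0)) => ->; [left; rewrite scale0r | right; rewrite scale1r].
Qed.

(* Over Z_2 the kernel part of u - y is either 0 or x. *)
Lemma kermx_line_transfer n k (M M' : 'M[Z2]_(n, k)) (x y u : 'rV_n) z :
  (kermx M == <<x>>)%MS -> y *m M' = 0 -> y *m M = z -> x *m M' = z ->
  u *m M' != 0 -> u *m M = z -> u *m M' = z.
Proof.
move=> /kermx_line [xM kerM] yM' yM xM' uM'_neq0 uM.
have : (u - y) *m M = 0 by rewrite mulmxBl uM yM subrr.
case/kerM => /eqP; rewrite subr_eq ?add0r => /eqP u_eq.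
  by move: uM'_neq0; rewrite u_eq yM' eqxx.
by rewrite u_eq mulmxDl xM' yM' addr0.
Qed.

Definition i0 : 'I_4 := @Ordinal 4 0 isT.
Definition i1 : 'I_4 := @Ordinal 4 1 isT.
Definition i2 : 'I_4 := @Ordinal 4 2 isT.
Definition i3 : 'I_4 := @Ordinal 4 3 isT.

Lemma I4_cases (k : 'I_4) : [\/ k = i0, k = i1, k = i2 | k = i3].
Proof.
by case: k => [[|[|[|[|n]]]] Hn];
  [apply: Or41 | apply: Or42 | apply: Or43 | apply: Or44 | ]; try exact/val_inj.
Qed.

Definition erow (k : 'I_4) : 'rV[Z2]_4 := \row_j (j == k)%:R.

Definition selm (f0 f1 : 'I_4) : 'M[Z2]_(4, 2) :=
  \matrix_(i, j) (i == if j == j0 then f0 else f1)%:R.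

Definition colf (R S : 'I_4) (al be : Z2) : 'cV[Z2]_4 :=
  \col_k (if k == R then al else if k == S then be else 0).

Lemma erowE k j : erow k 0 j = (j == k)%:R.
Proof. by rewrite mxE. Qed.

Lemma mulmx_selm (u : 'rV[Z2]_4) f0 f1 :
  u *m selm f0 f1 = \row_j u 0 (if j == j0 then f0 else f1).
Proof.
apply/rowP => j; rewrite !mxE (bigD1 (if j == j0 then f0 else f1)) //= !mxE eqxx mulr1.
by rewrite big1 ?addr0 // => i /negbTE i_neq; rewrite !mxE i_neq mulr0.
Qed.

Lemma erow_selml f0 f1 : f0 != f1 -> erow f0 *m selm f0 f1 = vec_a.
Proof.
move=> f01; apply/rowP => j; rewrite mulmx_selm !mxE.
by case: (I2_cases j) => -> /=; rewrite ?eqxx // eq_sym (negbTE f01).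
Qed.

Lemma erow_selmr f0 f1 : f0 != f1 -> erow f1 *m selm f0 f1 = vec_b.
Proof.
move=> f01; apply/rowP => j; rewrite mulmx_selm !mxE.
by case: (I2_cases j) => -> /=; rewrite ?eqxx // (negbTE f01).
Qed.

Lemma row_full_selm f0 f1 : f0 != f1 -> row_full (selm f0 f1).
Proof.
move=> f01; apply/row_fullP.
exists (\matrix_(i < 2, k < 4) (k == if i == j0 then f0 else f1)%:R).
apply/matrixP => i j.
rewrite !mxE (bigD1 (if i == j0 then f0 else f1)) //= !mxE eqxx mul1r.
rewrite big1 ?addr0; last by move=> k /negbTE k_neq; rewrite !mxE k_neq mul0r.
by case: (I2_cases i) => ->; case: (I2_cases j) => -> //=;
  rewrite ?eqxx ?(negbTE f01) // eq_sym (negbTE f01).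
Qed.

Lemma kermx_selm f0 f1 g0 g1 :
  (forall k, [|| k == f0, k == f1, k == g0 | k == g1]) ->
  g0 != f0 -> g0 != f1 -> g1 != f0 -> g1 != f1 -> g0 != g1 ->
  (kermx (selm f0 f1) == <<erow g0>> + <<erow g1>>)%MS.
Proof.
move=> cover h00 h01 h10 h11 g01; apply/andP; split.
- apply/row_subP => r; set t := row r _.
  have : t *m selm f0 f1 = 0 by apply/sub_kermxP; apply: row_sub.
  clearbody t; rewrite mulmx_selm => /rowP tM.
  have t0 : t 0 f0 = 0 by have := tM j0; rewrite !mxE.
  have t1 : t 0 f1 = 0 by have := tM j1; rewrite !mxE.
  have -> : t = t 0 g0 *: erow g0 + t 0 g1 *: erow g1.
    apply/rowP => k; rewrite !mxE; case/or4P: (cover k) => /eqP ->.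
    + by rewrite t0 eq_sym (negbTE h00) eq_sym (negbTE h10) !mulr0 addr0.
    + by rewrite t1 eq_sym (negbTE h01) eq_sym (negbTE h11) !mulr0 addr0.
    + by rewrite eqxx (negbTE g01) mulr1 mulr0 addr0.
    + by rewrite eqxx eq_sym (negbTE g01) mulr1 mulr0 add0r.
  by rewrite addmx_sub_adds // scalemx_sub // genmxE.
- rewrite addsmx_sub !genmxE; apply/andP; split; apply/sub_kermxP;
    rewrite mulmx_selm; apply/rowP => j; rewrite !mxE; case: (I2_cases j) => -> /=.
  + by rewrite eq_sym (negbTE h00).
  + by rewrite eq_sym (negbTE h01).
  + by rewrite eq_sym (negbTE h10).
  + by rewrite eq_sym (negbTE h11).
Qed.

Lemma colfE (z : 'rV[Z2]_4) R S al be : R != S ->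
  (z *m colf R S al be) 0 0 = z 0 R * al + z 0 S * be.
Proof.
move=> RS; rewrite mxE (bigD1 R) //= (bigD1 S) 1?eq_sym //= !mxE eqxx.
rewrite eq_sym (negbTE RS) eqxx big1 ?addr0 // => k /andP [kS kR].
by rewrite !mxE (negbTE kR) (negbTE kS) mulr0.
Qed.

(* Each row is separated from the span of the later ones by an explicit
   linear functional [colf]. *)
Lemma free_facet_rows (I J R S : 'I_4) (x y : 'rV[Z2]_4) :
  I != J -> R != S -> R != I -> R != J -> S != I -> S != J ->
  x *m selm R S \in abc -> y *m selm R S \in abc ->
  x *m selm R S != y *m selm R S ->
  free [:: x; y; erow I; erow J].
Proof.
move=> IJ RS RI RJ SI SJ hx hy hxy.
have ex j : (x *m selm R S) 0 j = x 0 (if j == j0 then R else S).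
  by rewrite mulmx_selm mxE.
have ey j : (y *m selm R S) 0 j = y 0 (if j == j0 then R else S).
  by rewrite mulmx_selm mxE.
rewrite !free_cons nil_free andbT; apply/and4P; split.
- apply: (functional_notin_span (phi := colf R S (y 0 S) (y 0 R))).
    move=> z; rewrite !inE => /or3P [] /eqP ->; rewrite colfE // ?erowE.
    + by rewrite [y 0 S * _]mulrC addrr_pchar2 // pchar2_Z2.
    + by rewrite (negbTE RI) (negbTE SI) !mul0r addr0.
    + by rewrite (negbTE RJ) (negbTE SJ) !mul0r addr0.
  rewrite colfE //; have := abc_det_neq0 hx hy hxy.
  by rewrite !ex !ey /= [x 0 S * _]mulrC.
- apply: (functional_notin_span (phi := colf R S (y 0 R) (1 - y 0 R))).
    move=> z; rewrite !inE => /orP [] /eqP ->; rewrite colfE // ?erowE.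
    + by rewrite (negbTE RI) (negbTE SI) !mul0r addr0.
    + by rewrite (negbTE RJ) (negbTE SJ) !mul0r addr0.
  by rewrite colfE //; have := abc_form_neq0 hy; rewrite !ey.
- apply: (functional_notin_span (phi := colf I J 1 0)).
    move=> z; rewrite !inE => /eqP ->; rewrite colfE // ?erowE.
    by rewrite (negbTE IJ) mul0r mulr0 addr0.
  by rewrite colfE // !erowE eqxx mulr0 addr0 mulr1.
- apply: (functional_notin_span (phi := colf J I 1 0)) => //.
  by rewrite colfE 1?eq_sym // !erowE eqxx mulr0 addr0 mulr1.
Qed.

(** * Characteristic maps over the cycle *)

Lemma charmap_abc m (l : 'I_m -> 'rV[Z2]_2) v : charmap_Pm l -> l v \in abc.
Proof. by move=> hl; case: (hl v). Qed.

Lemma charmap_ordS m (l : 'I_m -> 'rV[Z2]_2) v : charmap_Pm l -> l v != l (ordS v).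
Proof. by move=> hl; case: (hl v). Qed.

Lemma p_adjacent_fiber m (p : 'I_m) (l l' : 'I_m -> 'rV[Z2]_2) z :
  p_adjacent p l l' -> charmap_Pm l -> charmap_Pm l' -> l p = z -> l' p = z ->
  forall v, (l v == z) = (l' v == z).
Proof.
case=> L [_ [M [_ kerM eM]] [M' [_ kerM' eM']]] hl hl' lp l'p v.
rewrite big_set1 in kerM; rewrite big_set1 in kerM'.
have [pM' _] := kermx_line kerM'; have [p2M _] := kermx_line kerM.
have pM : L (Some p) *m M = z by rewrite -lp -eM.
have p2M' : L None *m M' = z by rewrite -l'p -eM' /kap_p1 eqxx.
have [-> | vp] := eqVneq v p; first by rewrite lp l'p !eqxx.
have vM : L (Some v) *m M = l v := eM v.
have vM' : L (Some v) *m M' = l' v by rewrite -eM' /kap_p1 (negbTE vp).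
have l_neq0 := abc_neq0 (charmap_abc v hl).
have l'_neq0 := abc_neq0 (charmap_abc v hl').
apply/eqP/eqP => e.
- by rewrite -vM' (kermx_line_transfer kerM pM' pM p2M') ?vM' ?vM.
- by rewrite -vM (kermx_line_transfer kerM' p2M p2M' pM) ?vM ?vM'.
Qed.

Definition near m (x w : 'I_m) := [|| x == ord_pred w, x == w | x == ordS w].

Lemma in_nbhd m (A : {set 'I_m}) x : (x \in nbhd A) = [exists w in A, near x w].
Proof. by rewrite inE. Qed.

Lemma in_symdiff m (mu nu : 'I_m -> 'rV[Z2]_2) v :
  (v \in symdiff mu nu) = (mu v != nu v).
Proof. by rewrite inE. Qed.

Lemma near_refl m (x : 'I_m) : near x x.
Proof. by rewrite /near eqxx orbT. Qed.

Lemma near_sym m (x w : 'I_m) : near x w -> near w x.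
Proof.
rewrite /near => /or3P [] /eqP ->.
- by rewrite ord_predK eqxx !orbT.
- by rewrite eqxx orbT.
- by rewrite ordSK eqxx.
Qed.

Lemma near_ordS m (i : 'I_m) : near i (ordS i).
Proof. by rewrite /near ordSK eqxx. Qed.

Lemma near_face m (x w : 'I_m) : near x w -> Pm_face [set x; w].
Proof.
rewrite /near => /or3P [] /eqP ->; apply/existsP.
- by exists (ord_pred w); rewrite ord_predK.
- by exists w; rewrite setUid sub1set !inE eqxx.
- by exists w; rewrite setUC.
Qed.

Lemma mem_nbhd m (A : {set 'I_m}) x : x \in A -> x \in nbhd A.
Proof. by move=> xA; rewrite in_nbhd; apply/exists_inP; exists x; rewrite ?near_refl. Qed.

Lemma edge_in_nbhd m (A : {set 'I_m}) i : (i \in A) || (ordS i \in A) -> i \in nbhd A.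
Proof.
case/orP => [/mem_nbhd // | iS_A].
by rewrite in_nbhd; apply/exists_inP; exists (ordS i); rewrite ?near_ordS.
Qed.

Lemma charmap_near m (l : 'I_m -> 'rV[Z2]_2) x w :
  charmap_Pm l -> near x w -> x != w -> l x != l w.
Proof.
move=> hl /or3P [] /eqP -> xw.
- by rewrite -{2}(ord_predK w); apply: charmap_ordS.
- by rewrite eqxx in xw.
- by rewrite eq_sym; apply: charmap_ordS.
Qed.

Lemma eq_charmap_Pm m (l l' : 'I_m -> 'rV[Z2]_2) :
  l =1 l' -> charmap_Pm l -> charmap_Pm l'.
Proof. by move=> e hl i; rewrite -!e. Qed.

Lemma disjoint_nbhd_symdiff m (l1 l2 l3 : 'I_m -> 'rV[Z2]_2) :
  charmap_Pm l1 -> charmap_Pm l2 -> charmap_Pm l3 ->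
  (forall v, (l1 v == vec_a) = (l2 v == vec_a)) ->
  (forall v, (l1 v == vec_b) = (l3 v == vec_b)) ->
  nbhd (symdiff l1 l2) :&: symdiff l1 l3 = set0 ->
  nbhd (symdiff l1 l2) :&: nbhd (symdiff l1 l3) = set0.
Proof.
move=> h1 h2 h3 a12 b13 disj.
have notD13 y : y \in nbhd (symdiff l1 l2) -> y \notin symdiff l1 l3.
  by move=> y_nb; apply/negP => yD; have := in_set0 y; rewrite -disj inE y_nb yD.
apply/setP => x; rewrite inE in_set0; apply/negP => /andP [x_nb2].
rewrite in_nbhd => /exists_inP [w3 w3D nx3].
have := x_nb2; rewrite in_nbhd => /exists_inP [w2 w2D nx2].
have xD3 := notD13 _ x_nb2.
have xD2 : x \notin symdiff l1 l2.
  apply: contraL w3D => xD2; apply: notD13.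
  by rewrite in_nbhd; apply/exists_inP; exists x => //; apply: near_sym.
have xw2 : x != w2 by apply: contraNneq xD2 => ->.
have xw3 : x != w3 by apply: contraNneq xD3 => ->.
move: xD2 xD3 w2D w3D; rewrite !in_symdiff !negbK => /eqP e2 /eqP e3 D2 D3.
have xa : l1 x = vec_a.
  apply: (abc_third abc_a (charmap_abc x h1) (charmap_abc w2 h1) (charmap_abc w2 h2)
            (a12 w2) D2).
  - exact: charmap_near h1 nx2 xw2.
  - by rewrite e2; apply: charmap_near h2 nx2 xw2.
have xb : l1 x = vec_b.
  apply: (abc_third abc_b (charmap_abc x h1) (charmap_abc w3 h1) (charmap_abc w3 h3)
            (b13 w3) D3).
  - exact: charmap_near h1 nx3 xw3.
  - by rewrite e3; apply: charmap_near h3 nx3 xw3.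
by move: neq_ab; rewrite -xa -xb eqxx.
Qed.

(** * Faces of the wedge *)

Lemma Pm_faceS m (F N : {set 'I_m}) : Pm_face F -> N \subset F -> Pm_face N.
Proof. by case/existsP => i Fi NF; apply/existsP; exists i; apply: subset_trans Fi. Qed.

Lemma min_nonface_sub (V : finType) (K : {set V} -> bool) (X : {set V}) :
  ~~ K X -> exists2 N, N \in min_nonfaces K & N \subset X.
Proof.
move=> nKX; have [N minN NX] := minset_exists (P := fun T => ~~ K T) nKX.
exists N => //; rewrite inE (minsetp minN); apply/forallP => T.
apply/implyP => TN; apply/negPn/negP => nKT.
by move: (TN); rewrite (minsetinf minN nKT (proper_sub TN)) properxx.
Qed.

(* [pv p true], [pv p false] are the vertices p_1, p_2 of the wedge, and
   [qv q true], [qv q false] are q_1, q_2. *)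
Definition pv m (p : 'I_m) (b : bool) : 'I_m + bool := if b then inl p else inr false.
Definition qv m (q : 'I_m) (b : bool) : 'I_m + bool := if b then inl q else inr true.

Section Wedge.
Variables (m : nat) (p q : 'I_m).
Hypothesis pq : p != q.

Lemma kap2_p pp qq : kap2 p q pp qq p = pp.
Proof. by rewrite /kap2 eqxx. Qed.

Lemma kap2_q pp qq : kap2 p q pp qq q = qq.
Proof. by rewrite /kap2 eq_sym (negbTE pq) eqxx. Qed.

Lemma kap2_other pp qq v : v != p -> v != q -> kap2 p q pp qq v = inl v.
Proof. by move=> vp vq; rewrite /kap2 (negbTE vp) (negbTE vq). Qed.

Lemma wed2_face_inl (F : {set 'I_m}) : Pm_face F ->
  wed2 (@Pm_face m) p q ((inl @: F) :|: [set inl p; inl q]).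
Proof.
move=> faceF; apply/forall_inP => N; rewrite inE => /andP [nKN _]; apply/negP => NS.
have inr_notin (b : bool) : inr b \notin (inl @: F) :|: [set inl p; inl q].
  by rewrite !inE; apply/negP => /orP [/imsetP [] | /orP [] /eqP].
have pN : p \notin N.
  apply: (contraNN _ (inr_notin false)) => pN; apply: (subsetP NS).
  by rewrite /wed2_rep pN !inE eqxx !orbT.
have qN : q \notin N.
  apply: (contraNN _ (inr_notin true)) => qN; apply: (subsetP NS).
  by rewrite /wed2_rep qN !inE eqxx !orbT.
move/negP: nKN; apply; apply: (Pm_faceS faceF); apply/subsetP => v vN.
have : inl v \in wed2_rep p q N by rewrite /wed2_rep !inE imset_f.
move/(subsetP NS); rewrite !inE => /orP [/imsetP [w wF [->]] // | /orP [] /eqP [] ev].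
  by move: pN; rewrite -ev vN.
by move: qN; rewrite -ev vN.
Qed.

Definition wed2_shadow (S : {set 'I_m + bool}) : {set 'I_m} :=
  [set v | ((v != p) && (v != q) && (inl v \in S))
        || ((v == p) && (inl p \in S) && (inr false \in S))
        || ((v == q) && (inl q \in S) && (inr true \in S))].

Lemma wed2_shadow_face S : wed2 (@Pm_face m) p q S -> Pm_face (wed2_shadow S).
Proof.
move=> faceS; case: (boolP (Pm_face _)) => // /min_nonface_sub [N minN NS].
exfalso; apply: (negP (forall_inP faceS N minN)).
have inl_S v : v \in wed2_shadow S -> inl v \in S.
  by rewrite inE => /orP [/orP [/andP [_ ->] //|] |] /andP [/andP [/eqP -> ->] _].
have p2_S : p \in wed2_shadow S -> inr false \in S.
  by rewrite inE eqxx (negbTE pq) /= orbF => /andP [_ ->].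
have q2_S : q \in wed2_shadow S -> inr true \in S.
  by rewrite inE eqxx eq_sym (negbTE pq) /= => /andP [_ ->].
apply/subsetP => x; rewrite /wed2_rep !inE => /orP [/orP [|] |].
- by case/imsetP => v /(subsetP NS) /inl_S vS ->.
- by case: ifP => pN; rewrite ?inE // => /eqP ->; apply/p2_S/(subsetP NS).
- by case: ifP => qN; rewrite ?inE // => /eqP ->; apply/q2_S/(subsetP NS).
Qed.

(* Take [bp := p_2 \in S], [bq := q_2 \in S] and an edge {i, i+1} of P_m
   containing the shadow of S. *)
Lemma wed2_face_sub_facet S : wed2 (@Pm_face m) p q S -> exists bp bq (i : 'I_m),
  {subset enum S <= [:: kap2 p q (pv p bp) (qv q bq) i;
                        kap2 p q (pv p bp) (qv q bq) (ordS i);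
                        pv p (~~ bp); qv q (~~ bq)]}.
Proof.
move=> faceS; have [i shadow_i] := existsP (wed2_shadow_face faceS).
have in_edge v : v \in wed2_shadow S -> (v == i) || (v == ordS i).
  by move/(subsetP shadow_i); rewrite !inE.
exists (inr false \in S), (inr true \in S), i => x; rewrite mem_enum.
case: x => [v | []] xS; rewrite !inE; last 2 first.
- by rewrite xS eqxx !orbT.
- by rewrite xS eqxx !orbT.
have [ev | vp] := eqVneq v p.
  subst v; case: (boolP (inr false \in S)) => p2S; last by rewrite eqxx !orbT.
  have : p \in wed2_shadow S by rewrite inE eqxx xS p2S !orbT.
  by case/in_edge/orP => /eqP <-; rewrite kap2_p eqxx ?orbT.
have [ev | vq] := eqVneq v q.
  subst v; case: (boolP (inr true \in S)) => q2S; last by rewrite eqxx !orbT.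
  have : q \in wed2_shadow S by rewrite inE eqxx xS q2S !orbT.
  by case/in_edge/orP => /eqP <-; rewrite kap2_q eqxx ?orbT.
have : v \in wed2_shadow S by rewrite inE vp vq xS.
by case/in_edge/orP => /eqP <-; rewrite (kap2_other _ _ vp vq) eqxx ?orbT.
Qed.

Lemma charmap_wed2_free (L : 'I_m + bool -> 'rV[Z2]_4) (F : {set 'I_m}) (t : seq 'I_m) :
  is_charmap (wed2 (@Pm_face m) p q) L -> Pm_face F -> uniq t ->
  (forall v, v \in t -> [|| v \in F, v == p | v == q]) ->
  free [seq L (inl v) | v <- t].
Proof.
move=> HL faceF t_uniq t_sub; rewrite (map_comp L inl).
apply: free_map_sub (HL _ (wed2_face_inl faceF)).
  by rewrite map_inj_uniq // => x y [].
move=> _ /mapP [v /t_sub vt ->]; rewrite mem_enum !inE.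
by case/or3P: vt => [vF | /eqP -> | /eqP ->]; rewrite ?eqxx ?orbT // imset_f.
Qed.

End Wedge.

(** * Realizable squares have disjoint changes *)

Section Necessity.
Variables (m : nat) (p q : 'I_m) (l1 l2 l3 : 'I_m -> 'rV[Z2]_2).
Hypotheses (pq : p != q)
  (h1 : charmap_Pm l1) (h2 : charmap_Pm l2) (h3 : charmap_Pm l3)
  (l1p : l1 p = vec_a) (l2p : l2 p = vec_a) (l3p : l3 p = vec_a)
  (l1q : l1 q = vec_b) (l2q : l2 q = vec_b) (l3q : l3 q = vec_b)
  (a12 : forall v, (l1 v == vec_a) = (l2 v == vec_a))
  (b13 : forall v, (l1 v == vec_b) = (l3 v == vec_b)).

Lemma symdiff12_neq v : v \in symdiff l1 l2 -> (v != p) && (v != q).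
Proof.
move=> vD; apply/andP; split; apply: contraTneq vD => ->.
  by rewrite in_symdiff l1p l2p eqxx.
by rewrite in_symdiff l1q l2q eqxx.
Qed.

Lemma symdiff13_neq v : v \in symdiff l1 l3 -> (v != p) && (v != q).
Proof.
move=> vD; apply/andP; split; apply: contraTneq vD => ->.
  by rewrite in_symdiff l1p l3p eqxx.
by rewrite in_symdiff l1q l3q eqxx.
Qed.

Section Realization.
Variables (L : 'I_m + bool -> 'rV[Z2]_4) (M1 M2 M3 : 'M[Z2]_(4, 2)).
Hypotheses (HL : is_charmap (wed2 (@Pm_face m) p q) L)
  (k1 : (kermx M1 == <<L (inr false)>> + <<L (inr true)>>)%MS)
  (k2 : (kermx M2 == <<L (inl p)>> + <<L (inr true)>>)%MS)
  (k3 : (kermx M3 == <<L (inr false)>> + <<L (inl q)>>)%MS)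
  (e1 : forall v, L (kap2 p q (inl p) (inl q) v) *m M1 = l1 v)
  (e2 : forall v, L (kap2 p q (inr false) (inl q) v) *m M2 = l2 v)
  (e3 : forall v, L (kap2 p q (inl p) (inr true) v) *m M3 = l3 v).

(* Each projection fixes two of the four coordinates of L v on the basis
   L p_1, L q_1, L p_2, L q_2. *)
Lemma charmap_wed2_decomp v : v != p -> v != q ->
  L (inl v) = l1 v 0 j0 *: L (inl p) + l1 v 0 j1 *: L (inl q)
            + l2 v 0 j0 *: L (inr false) + l3 v 0 j1 *: L (inr true).
Proof.
move=> vp vq.
have [_ _ kerM1] := kermx_plane k1.
have [p1M2 q2M2 _] := kermx_plane k2.
have [p2M3 q1M3 _] := kermx_plane k3.
have p1M1 : L (inl p) *m M1 = vec_a by rewrite -l1p -(e1 p) kap2_p.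
have q1M1 : L (inl q) *m M1 = vec_b by rewrite -l1q -(e1 q) kap2_q.
have q1M2 : L (inl q) *m M2 = vec_b by rewrite -l2q -(e2 q) kap2_q.
have p2M2 : L (inr false) *m M2 = vec_a by rewrite -l2p -(e2 p) kap2_p.
have p1M3 : L (inl p) *m M3 = vec_a by rewrite -l3p -(e3 p) kap2_p.
have q2M3 : L (inr true) *m M3 = vec_b by rewrite -l3q -(e3 q) kap2_q.
have vM2 : L (inl v) *m M2 = l2 v by rewrite -(e2 v) kap2_other.
have vM3 : L (inl v) *m M3 = l3 v by rewrite -(e3 v) kap2_other.
have : (L (inl v) - (l1 v 0 j0 *: L (inl p) + l1 v 0 j1 *: L (inl q))) *m M1 = 0.
  rewrite mulmxBl mulmxDl -!scalemxAl p1M1 q1M1 -(e1 v) kap2_other //.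
  by rewrite -rV2_decomp subrr.
case/kerM1 => s [s' /eqP]; rewrite subr_eq => /eqP vE.
have -> : l2 v 0 j0 = s.
  move/rowP/(_ j0): vM2; rewrite vE !mulmxDl -!scalemxAl p1M2 q1M2 p2M2 q2M2.
  rewrite !mxE /= => <-.
  by rewrite !mulr0 !mulr1 ?addr0 ?add0r.
have -> : l3 v 0 j1 = s'.
  move/rowP/(_ j1): vM3; rewrite vE !mulmxDl -!scalemxAl p1M3 q1M3 p2M3 q2M3.
  rewrite !mxE /= => <-.
  by rewrite !mulr0 !mulr1 ?addr0 ?add0r.
by rewrite vE addrC !addrA.
Qed.

Lemma symdiff_disjoint w : w \in symdiff l1 l2 -> w \notin symdiff l1 l3.
Proof.
move=> wD12; apply/negP => wD13; have /andP [wp wq] := symdiff12_neq wD12.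
move: wD12 wD13; rewrite !in_symdiff => n12 n13.
have [l1w l2w l3w] := abc_change_both (charmap_abc w h1) (charmap_abc w h2)
  (charmap_abc w h3) (a12 w) (b13 w) n12 n13.
have t_uniq : uniq [:: w; p; q] by rewrite /= !inE negb_or wp wq pq.
have t_sub x : x \in [:: w; p; q] -> [|| x \in [set w; w], x == p | x == q].
  by rewrite !inE => /or3P [] ->; rewrite ?orbT.
have := charmap_wed2_free HL (near_face (near_refl w)) t_uniq t_sub.
rewrite free_cons => /andP [/negP []].
rewrite (charmap_wed2_decomp wp wq) l1w l2w l3w !mxE /= !scale1r !scale0r !addr0.
by rewrite memvD ?memv_span // !inE eqxx ?orbT.
Qed.

(* Otherwise L v = L p_1 + L p_2 + L q_2 and L w = L q_1 + L p_2 + L q_2, so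
   the face {v, w, p_1, q_1} is not free. *)
Lemma adjacent_changes v w : near v w ->
  v \in symdiff l1 l3 -> w \in symdiff l1 l2 ->
  (v \in symdiff l1 l2) || (w \in symdiff l1 l3).
Proof.
move=> nvw vD13 wD12; apply/norP => -[vD12 wD13].
have vw : v != w by apply: contraNneq vD12 => ->.
have /andP [vp vq] := symdiff13_neq vD13.
have /andP [wp wq] := symdiff12_neq wD12.
move: vD12 wD13 (vD13) (wD12); rewrite !in_symdiff !negbK => /eqP l2v /eqP l3w n13 n12.
have n11 := charmap_near h1 nvw vw.
have n12' : l1 v != l2 w by rewrite l2v; apply: charmap_near h2 nvw vw.
have n31 : l3 v != l1 w by rewrite l3w; apply: charmap_near h3 nvw vw.
have [l1v l3v l1w l2w] := abc_change_adjacent (charmap_abc v h1) (charmap_abc v h3)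
  (charmap_abc w h1) (charmap_abc w h2) (b13 v) (a12 w) n13 n12 n11 n12' n31.
have t_uniq : uniq [:: v; w; p; q] by rewrite /= !inE !negb_or vw vp vq wp wq pq.
have t_sub x : x \in [:: v; w; p; q] -> [|| x \in [set v; w], x == p | x == q].
  by rewrite !inE => /or4P [] ->; rewrite ?orbT.
have := charmap_wed2_free HL (near_face nvw) t_uniq t_sub.
rewrite free_cons => /andP [/negP []].
have -> : L (inl v) = L (inl p) + (L (inl w) - L (inl q)).
  rewrite (charmap_wed2_decomp vp vq) (charmap_wed2_decomp wp wq).
  rewrite -l2v -l3w l1v l3v l1w l2w !mxE /= !scale1r !scale0r !addr0 !add0r.
  by rewrite -addrA -(addrA (L (inl q))) (addrC (L (inl q))) addrK.
by rewrite memvD ?memvB ?memv_span // !inE eqxx ?orbT.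
Qed.

End Realization.

Lemma square_realizable_disjoint : square_realizable p q l1 l2 l3 ->
  nbhd (symdiff l1 l2) :&: symdiff l1 l3 = set0.
Proof.
case=> L [HL [M1 [_ k1 e1]] [M2 [_ k2 e2]] [M3 [_ k3 e3]]].
rewrite !sumsmx_set2 // in k1 k2 k3.
apply/setP => v; rewrite inE in_set0; apply/negP => /andP [].
rewrite in_nbhd => /exists_inP [w wD12 nvw] vD13.
have no_common := symdiff_disjoint HL k1 k2 k3 e1 e2 e3.
case/orP: (adjacent_changes HL k1 k2 k3 e1 e2 e3 nvw vD13 wD12) => [vD12 | wD13].
- by rewrite (negbTE (no_common _ vD12)) in vD13.
- by rewrite (negbTE (no_common _ wD12)) in wD13.
Qed.

End Necessity.

(** * Realizing a square *)

Section Construction.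
Variables (m : nat) (p q : 'I_m) (l1 l2 l3 : 'I_m -> 'rV[Z2]_2).
Hypotheses (pq : p != q)
  (h1 : charmap_Pm l1) (h2 : charmap_Pm l2) (h3 : charmap_Pm l3)
  (l1p : l1 p = vec_a) (l2p : l2 p = vec_a) (l3p : l3 p = vec_a)
  (l1q : l1 q = vec_b) (l2q : l2 q = vec_b) (l3q : l3 q = vec_b)
  (a12 : forall v, (l1 v == vec_a) = (l2 v == vec_a))
  (b13 : forall v, (l1 v == vec_b) = (l3 v == vec_b)).

(* p_1, q_1, p_2, q_2 go to the standard basis e_0, e_1, e_2, e_3 and any other
   v to the combination forced by [charmap_wed2_decomp]. *)
Definition Lam (x : 'I_m + bool) : 'rV[Z2]_4 :=
  match x with
  | inl v => if v == p then erow i0 else if v == q then erow i1 else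
     \row_k (if k == i0 then l1 v 0 j0 else if k == i1 then l1 v 0 j1
             else if k == i2 then l2 v 0 j0 else l3 v 0 j1)
  | inr b => erow (if b then i3 else i2)
  end.

Definition pcol (b : bool) : 'I_4 := if b then i0 else i2.
Definition qcol (b : bool) : 'I_4 := if b then i1 else i3.

(* The projection of [Lam] to the link of {pv p (~~ bp), qv q (~~ bq)}. *)
Definition lam (bp bq : bool) (v : 'I_m) : 'rV[Z2]_2 :=
  mix (if bp then l1 v else l2 v) (if bq then l1 v else l3 v).

Lemma Lam_pv b : Lam (pv p b) = erow (pcol b).
Proof. by case: b; rewrite /= ?eqxx. Qed.

Lemma Lam_qv b : Lam (qv q b) = erow (qcol b).
Proof. by case: b; rewrite //= eq_sym (negbTE pq) eqxx. Qed.

Lemma pcol_neq_qcol bp bq : pcol bp != qcol bq.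
Proof. by case: bp; case: bq. Qed.

Lemma lam_p bp bq : lam bp bq p = vec_a.
Proof. by case: bp; case: bq; rewrite /lam ?l1p ?l2p ?l3p mix_id. Qed.

Lemma lam_q bp bq : lam bp bq q = vec_b.
Proof. by case: bp; case: bq; rewrite /lam ?l1q ?l2q ?l3q mix_id. Qed.

Lemma Lam_proj bp bq v :
  Lam (kap2 p q (pv p bp) (qv q bq) v) *m selm (pcol bp) (qcol bq) = lam bp bq v.
Proof.
have [-> | vp] := eqVneq v p.
  by rewrite kap2_p Lam_pv erow_selml ?pcol_neq_qcol ?lam_p.
have [-> | vq] := eqVneq v q.
  by rewrite kap2_q // Lam_qv erow_selmr ?pcol_neq_qcol ?lam_q.
rewrite kap2_other //= (negbTE vp) (negbTE vq) mulmx_selm.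
by apply/rowP => j; rewrite !mxE; case: (I2_cases j) => ->; case: bp; case: bq.
Qed.

Lemma l2_coord1 v : l2 v 0 j1 = l1 v 0 j1.
Proof. by rewrite (abc_coord1 (charmap_abc v h1) (charmap_abc v h2) (a12 v)). Qed.

Lemma l3_coord0 v : l1 v 0 j0 = l3 v 0 j0.
Proof. exact: abc_coord0 (charmap_abc v h1) (charmap_abc v h3) (b13 v). Qed.

Lemma lam_tt : lam true true =1 l1.
Proof. by move=> v; rewrite /lam mix_id. Qed.

Lemma lam_ft : lam false true =1 l2.
Proof. by move=> v; rewrite /lam mix_eql ?l2_coord1. Qed.

Lemma lam_tf : lam true false =1 l3.
Proof. by move=> v; rewrite /lam mix_eqr ?l3_coord0. Qed.

Lemma lam_ff_l3 v : v \notin symdiff l1 l2 -> lam false false v = l3 v.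
Proof. by rewrite in_symdiff negbK => /eqP e; rewrite /lam mix_eqr -?e ?l3_coord0. Qed.

Lemma lam_ff_l2 v : v \notin symdiff l1 l3 -> lam false false v = l2 v.
Proof. by rewrite in_symdiff negbK => /eqP e; rewrite /lam mix_eql // l2_coord1 e. Qed.

Lemma kermx_selm_Lam bp bq :
  (kermx (selm (pcol bp) (qcol bq))
     == \sum_(v in [set pv p (~~ bp); qv q (~~ bq)]) <<Lam v>>)%MS.
Proof.
rewrite sumsmx_set2; last by case: bp; case: bq.
rewrite Lam_pv Lam_qv.
by case: bp; case: bq; apply: kermx_selm => // k; case: (I4_cases k) => ->.
Qed.

Lemma Lam_proj_equiv bp bq l : lam bp bq =1 l ->
  proj_equiv Lam [set pv p (~~ bp); qv q (~~ bq)] (kap2 p q (pv p bp) (qv q bq)) l.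
Proof.
move=> lam_l; exists (selm (pcol bp) (qcol bq)); split.
- exact/row_full_selm/pcol_neq_qcol.
- exact: kermx_selm_Lam.
- by move=> v; rewrite Lam_proj lam_l.
Qed.

Hypothesis disj : nbhd (symdiff l1 l2) :&: nbhd (symdiff l1 l3) = set0.

(* On each edge of P_m the projection to the link of {p_1, q_1} agrees with
   [l2] or with [l3]: this is where the disjointness is used. *)
Lemma lam_ff_charmap : charmap_Pm (lam false false).
Proof.
move=> i.
have [l hl [-> ->]] : exists2 l, charmap_Pm l &
    lam false false i = l i /\ lam false false (ordS i) = l (ordS i).
  case: (boolP ((i \in symdiff l1 l2) || (ordS i \in symdiff l1 l2))) => D12; last first.
    by exists l3; move: D12; rewrite // negb_or => /andP [/lam_ff_l3 -> /lam_ff_l3 ->].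
  exists l2; rewrite //; have : ~~ ((i \in symdiff l1 l3) || (ordS i \in symdiff l1 l3)).
    apply/negP => /edge_in_nbhd D13; have := in_set0 i.
    by rewrite -disj inE D13 edge_in_nbhd.
  by rewrite negb_or => /andP [/lam_ff_l2 -> /lam_ff_l2 ->].
by case: (hl i).
Qed.

Lemma lam_charmap bp bq : charmap_Pm (lam bp bq).
Proof.
case: bp; case: bq; last exact: lam_ff_charmap.
- exact: eq_charmap_Pm (fun v => esym (lam_tt v)) h1.
- exact: eq_charmap_Pm (fun v => esym (lam_tf v)) h3.
- exact: eq_charmap_Pm (fun v => esym (lam_ft v)) h2.
Qed.

Lemma Lam_charmap : is_charmap (wed2 (@Pm_face m) p q) Lam.
Proof.
move=> S /(wed2_face_sub_facet pq) [bp [bq [i S_sub]]].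
apply: (free_map_sub (enum_uniq _) S_sub); clear S_sub; rewrite /= Lam_pv Lam_qv.
apply: (free_facet_rows (R := pcol bp) (S := qcol bq)); rewrite ?Lam_proj;
  try by case: bp; case: bq.
all: by case: (lam_charmap bp bq i); case: (lam_charmap bp bq (ordS i)).
Qed.

Lemma square_realizable_of_disjoint : square_realizable p q l1 l2 l3.
Proof.
exists Lam; split; first exact: Lam_charmap.
- exact: (Lam_proj_equiv lam_tt).
- exact: (Lam_proj_equiv lam_ft).
- exact: (Lam_proj_equiv lam_tf).
Qed.

End Construction.

Theorem lemma3 (m : nat) (p q : 'I_m) (l1 l2 l3 : 'I_m -> 'rV[Z2]_2) :
  (3 <= m)%N -> p != q ->
  charmap_Pm l1 -> charmap_Pm l2 -> charmap_Pm l3 ->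
  l1 p = vec_a -> l2 p = vec_a -> l3 p = vec_a ->
  l1 q = vec_b -> l2 q = vec_b -> l3 q = vec_b ->
  p_adjacent p l1 l2 -> p_adjacent q l1 l3 ->
  [<-> square_realizable p q l1 l2 l3;
       nbhd (symdiff l1 l2) :&: symdiff l1 l3 = set0;
       nbhd (symdiff l1 l2) :&: nbhd (symdiff l1 l3) = set0].
Proof.
move=> _ pq h1 h2 h3 l1p l2p l3p l1q l2q l3q adj12 adj13.
have a12 := p_adjacent_fiber adj12 h1 h2 l1p l2p.
have b13 := p_adjacent_fiber adj13 h1 h3 l1q l3q.
tfae.
- exact: square_realizable_disjoint.
- exact: disjoint_nbhd_symdiff.
- exact: square_realizable_of_disjoint.
Qed.
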